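(* Let $x\in[0,1)$, $\lambda>0$ and $\alpha\in(0,1)$, and suppose that either (1) $\alpha>\frac{1}{1-x}\left[\frac{1}{\lambda}-x\right]$, or (2) $\alpha\in\left(0,1-\frac{1}{\lambda(1-x)}\right)$. Then the truth has a unique globally stable steady-state prevalence $\theta_0$, and it is positive. Moreover, whenever these conditions imply that the rumor is also endemic ($\theta_1>0$), this steady state $\theta_0$, viewed as the solution of $\theta_0=H(\theta_0)$, is strictly increasing in $\theta_1$.
   Context: Model: a continuum population of mass $1$; a mass $x$ of agents are of type $0$ (biased towards the truth) and $1-x$ of type $1$ (biased towards the rumor). In each type a fraction $\alpha$ of agents inspect messages; non-inspecting agents believe only the message matching their type, inspecting agents believe and transmit the truth upon receiving either message. With $k$ meetings per period, transmission rate $\nu$, death rate $\delta$ of informed agents, set $\lambda=k\nu/\delta$. Let $\rho^{\alpha}_{0,0},\rho^{1-\alpha}_{0,0},\rho^{\alpha}_{1,0},\rho^{1-\alpha}_{1,1}$ be the fractions of inspecting type-0 agents believing the truth, non-inspecting type-0 agents believing the truth, inspecting type-1 agents believing the truth, and non-inspecting type-1 agents believing the rumor; truth prevalence is $\theta_0=x[\alpha\rho^{\alpha}_{0,0}+(1-\alpha)\rho^{1-\alpha}_{0,0}]+(1-x)\alpha\rho^{\alpha}_{1,0}$ and rumor prevalence is $\theta_1=(1-x)(1-\alpha)\rho^{1-\alpha}_{1,1}$. Dynamics: $\dot\rho^{\alpha}_{0,0}=x\alpha[(1-\rho^{\alpha}_{0,0})k\nu(\theta_0+\theta_1)-\rho^{\alpha}_{0,0}\delta]$,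 $\dot\rho^{1-\alpha}_{0,0}=x(1-\alpha)[(1-\rho^{1-\alpha}_{0,0})k\nu\theta_0-\rho^{1-\alpha}_{0,0}\delta]$, $\dot\rho^{\alpha}_{1,0}=(1-x)\alpha[(1-\rho^{\alpha}_{1,0})k\nu(\theta_0+\theta_1)-\rho^{\alpha}_{1,0}\delta]$, $\dot\rho^{1-\alpha}_{1,1}=(1-x)(1-\alpha)[(1-\rho^{1-\alpha}_{1,1})k\nu\theta_1-\rho^{1-\alpha}_{1,1}\delta]$. The steady-state rumor prevalence is $\theta_1=\max\{(1-\alpha)(1-x)-1/\lambda,0\}$ (the rumor is endemic iff this is positive). A steady-state truth prevalence is a fixed point $\theta_0=H(\theta_0)$ of $H(\theta_0)=\alpha\frac{\lambda(\theta_0+\theta_1)}{1+\lambda(\theta_0+\theta_1)}+x(1-\alpha)\frac{\lambda\theta_0}{1+\lambda\theta_0}$. *)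

From Stdlib Require Import Reals Lra.
From Coquelicot Require Import Coquelicot.
Open Scope R_scope.

(* Truth prevalence from the four belief fractions
   a = rho^alpha_{0,0}, b = rho^{1-alpha}_{0,0}, c = rho^alpha_{1,0}. *)
Definition theta0 (x alpha a b c : R) : R :=
  x * (alpha * a + (1 - alpha) * b) + (1 - x) * alpha * c.

(* Rumor prevalence from d = rho^{1-alpha}_{1,1}. *)
Definition theta1 (x alpha d : R) : R := (1 - x) * (1 - alpha) * d.

Definition theta1_ss (x alpha lam : R) : R :=
  Rmax ((1 - alpha) * (1 - x) - / lam) 0.

(* The map whose fixed points are the steady-state truth prevalences,
   given the rumor prevalence th1. *)
Definition H (x alpha lam th1 th0 : R) : R :=
  alpha * (lam * (th0 + th1) / (1 + lam * (th0 + th1)))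
  + x * (1 - alpha) * (lam * th0 / (1 + lam * th0)).

(* (a,b,c,d) is a solution of the dynamics on [0, +oo) with k meetings per
   period, transmission rate nu and death rate delta. *)
Definition is_solution (x alpha k nu delta : R) (a b c d : R -> R) : Prop :=
  forall t, 0 <= t ->
    let th0 := theta0 x alpha (a t) (b t) (c t) in
    let th1 := theta1 x alpha (d t) in
    is_derive a t (x * alpha * ((1 - a t) * k * nu * (th0 + th1) - a t * delta)) /\
    is_derive b t (x * (1 - alpha) * ((1 - b t) * k * nu * th0 - b t * delta)) /\
    is_derive c t ((1 - x) * alpha * ((1 - c t) * k * nu * (th0 + th1) - c t * delta)) /\
    is_derive d t ((1 - x) * (1 - alpha) * ((1 - d t) * k * nu * th1 - d t * delta)).

(* H(th)/th is strictly decreasing and H(1) < 1, so H has at most one positive fixed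
   point, and it has one as soon as H lies above the diagonal near 0: condition (2) makes
   the rumor endemic (th1 > 0, so H(0) > 0), condition (1) makes the slope
   lam (alpha + x (1 - alpha)) of H at 0 exceed 1.  Since H increases with th1, so does
   its fixed point.

   Global stability is a comparison argument for this cooperative system.  Each believing
   fraction rho, with steady state rho_ss, is trapped in a box
   m(t) rho_ss <= rho <= M(t) rho_ss whose bounds relax exponentially from an initial box
   towards any m1 < 1 < M1; on each face the drift points strictly inward, thanks to the
   balance (1 - rho_ss) k nu I_ss = rho_ss delta.  The rumor fraction evolves on its own
   and is handled first (below the threshold it decays like 1/t); once th1 is close to its
   limit, the same argument traps the three truth-believing groups, and letting
   m1, M1 -> 1 gives convergence of th0 to the fixed point. *)

From Stdlib Require Import Reals Lra Psatz List.
From Coquelicot Require Import Coquelicot.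
Open Scope R_scope.
Import ListNotations.

(** * The fixed-point map H *)

(* The steady state of rho' = (1 - rho) k nu z - rho delta, with lam = k nu / delta. *)
Definition rho_ss (lam z : R) : R := lam * z / (1 + lam * z).

Lemma H_rho_ss x alpha lam s t :
  H x alpha lam s t = alpha * rho_ss lam (t + s) + x * (1 - alpha) * rho_ss lam t.
Proof. reflexivity. Qed.

Lemma rho_ss_bounds lam z : 0 < lam -> 0 <= z -> 0 <= rho_ss lam z < 1.
Proof.
intros Hlam Hz. unfold rho_ss. split.
- apply Rdiv_le_0_compat; nra.
- apply Rmult_lt_reg_r with (1 + lam * z); [nra|]. field_simplify; nra.
Qed.

Lemma rho_ss_pos lam z : 0 < lam -> 0 < z -> 0 < rho_ss lam z.
Proof. intros. unfold rho_ss. apply Rdiv_lt_0_compat; nra. Qed.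

Lemma rho_ss_balance k nu dl z : 0 < k * nu -> 0 < dl -> 0 <= z ->
  (1 - rho_ss (k * nu / dl) z) * (k * nu) * z = rho_ss (k * nu / dl) z * dl.
Proof.
intros Hknu Hdl Hz. unfold rho_ss. field. nra.
Qed.

Lemma rho_ss_increasing lam z1 z2 : 0 < lam -> 0 <= z1 < z2 -> rho_ss lam z1 < rho_ss lam z2.
Proof.
intros Hlam Hz. apply Rlt_0_minus.
replace (rho_ss lam z2 - rho_ss lam z1)
  with (lam * (z2 - z1) / ((1 + lam * z1) * (1 + lam * z2)))
  by (unfold rho_ss; field; split; nra).
apply Rdiv_lt_0_compat; apply Rmult_lt_0_compat; nra.
Qed.

Lemma rho_ss_le lam z1 z2 : 0 < lam -> 0 <= z1 <= z2 -> rho_ss lam z1 <= rho_ss lam z2.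
Proof.
intros Hlam [Hz1 [Hlt | ->]]; [|lra].
apply Rlt_le, rho_ss_increasing; lra.
Qed.

Lemma rho_ss_shift_ratio_lt lam s t1 t2 : 0 < lam -> 0 <= s -> 0 < t1 < t2 ->
  rho_ss lam (t2 + s) * t1 < rho_ss lam (t1 + s) * t2.
Proof.
intros Hlam Hs Ht. apply Rlt_0_minus.
replace (rho_ss lam (t1 + s) * t2 - rho_ss lam (t2 + s) * t1)
  with (lam * (t2 - t1) * (s + lam * (t1 + s) * (t2 + s))
        / ((1 + lam * (t1 + s)) * (1 + lam * (t2 + s))))
  by (unfold rho_ss; field; split; nra).
assert (0 < lam * (t1 + s) * (t2 + s)) by (repeat apply Rmult_lt_0_compat; lra).
apply Rdiv_lt_0_compat; repeat apply Rmult_lt_0_compat; nra.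
Qed.

Section FixedPoint.
Variables (x alpha lam : R).
Hypotheses (Hx : 0 <= x < 1) (Halpha : 0 < alpha < 1) (Hlam : 0 < lam).

Lemma H_ratio_lt s t1 t2 : 0 <= s -> 0 < t1 < t2 ->
  H x alpha lam s t2 * t1 < H x alpha lam s t1 * t2.
Proof.
intros Hs Ht. rewrite !H_rho_ss.
pose proof (rho_ss_shift_ratio_lt lam s t1 t2 Hlam Hs Ht) as Hsum.
pose proof (rho_ss_shift_ratio_lt lam 0 t1 t2 Hlam (Rle_refl 0) Ht) as Hown.
rewrite !Rplus_0_r in Hown.
assert (0 <= x * (1 - alpha)) by nra.
nra.
Qed.

Lemma H_increasing_in_rumor s1 s2 t : 0 <= s1 < s2 -> 0 <= t ->
  H x alpha lam s1 t < H x alpha lam s2 t.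
Proof.
intros Hs Ht. rewrite !H_rho_ss.
pose proof (rho_ss_increasing lam (t + s1) (t + s2) Hlam ltac:(lra)). nra.
Qed.

Lemma H_lt_1 s t : 0 <= s -> 0 <= t -> H x alpha lam s t < 1.
Proof.
intros Hs Ht. rewrite H_rho_ss.
pose proof (rho_ss_bounds lam (t + s) Hlam ltac:(lra)).
pose proof (rho_ss_bounds lam t Hlam Ht).
assert (0 <= x * (1 - alpha)) by nra.
nra.
Qed.

Lemma H_continuous s t : 0 <= s -> 0 <= t -> continuity_pt (H x alpha lam s) t.
Proof.
intros Hs Ht. apply derivable_continuous_pt, ex_derive_Reals_0.
unfold H. auto_derive. repeat split; nra.
Qed.

Lemma H_fixed_point_unique s t1 t2 : 0 <= s -> 0 < t1 -> 0 < t2 ->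
  H x alpha lam s t1 = t1 -> H x alpha lam s t2 = t2 -> t1 = t2.
Proof.
intros Hs Ht1 Ht2 E1 E2.
destruct (Rtotal_order t1 t2) as [Hlt | [Heq | Hgt]]; [|exact Heq|].
- pose proof (H_ratio_lt s t1 t2 Hs (conj Ht1 Hlt)) as Hratio. rewrite E1, E2 in Hratio. lra.
- pose proof (H_ratio_lt s t2 t1 Hs (conj Ht2 Hgt)) as Hratio. rewrite E1, E2 in Hratio. lra.
Qed.

Lemma H_fixed_point_increasing s1 s2 t1 t2 : 0 <= s1 < s2 -> 0 < t1 -> 0 < t2 ->
  H x alpha lam s1 t1 = t1 -> H x alpha lam s2 t2 = t2 -> t1 < t2.
Proof.
intros Hs Ht1 Ht2 E1 E2.
pose proof (H_increasing_in_rumor s1 s2 t1 Hs ltac:(lra)) as Hup.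
rewrite E1 in Hup.
destruct (Rlt_le_dec t1 t2) as [|[Hgt | Heq]]; [assumption| |subst; lra].
pose proof (H_ratio_lt s2 t2 t1 ltac:(lra) (conj Ht2 Hgt)) as Hratio.
rewrite E2 in Hratio. nra.
Qed.

Lemma H_above_diagonal_near_0 s : 0 <= s ->
  0 < s \/ 1 < lam * (alpha + x * (1 - alpha)) ->
  exists t0, 0 < t0 < 1 /\ t0 < H x alpha lam s t0.
Proof.
intros Hs [Hpos | Hsuper].
- set (c0 := alpha * rho_ss lam s).
  assert (Hc0 : 0 < c0) by (pose proof (rho_ss_pos lam s Hlam Hpos); unfold c0; nra).
  pose proof (Rmin_l (1/2) (c0/2)). pose proof (Rmin_r (1/2) (c0/2)).
  set (t0 := Rmin (1/2) (c0/2)) in *.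
  assert (Ht0 : 0 < t0) by (apply Rmin_pos; lra).
  exists t0. split; [lra|].
  rewrite H_rho_ss.
  pose proof (rho_ss_le lam s (t0 + s) Hlam ltac:(lra)).
  pose proof (rho_ss_bounds lam t0 Hlam ltac:(lra)).
  assert (alpha * rho_ss lam s <= alpha * rho_ss lam (t0 + s))
    by (apply Rmult_le_compat_l; lra).
  assert (0 <= x * (1 - alpha) * rho_ss lam t0) by (apply Rmult_le_pos; nra).
  unfold c0 in *. lra.
- set (c := alpha + x * (1 - alpha)) in *.
  pose proof (Rmin_l (1/2) ((lam * c - 1) / (2 * lam))) as Ht0half.
  pose proof (Rmin_r (1/2) ((lam * c - 1) / (2 * lam))) as Hle.
  set (t0 := Rmin (1/2) ((lam * c - 1) / (2 * lam))) in *.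
  assert (Ht0 : 0 < t0).
  { apply Rmin_pos; [lra|]. apply Rdiv_lt_0_compat; lra. }
  assert (Ht0c : lam * t0 < lam * c - 1).
  { apply Rmult_le_compat_l with (r := lam) in Hle; [|lra].
    replace (lam * ((lam * c - 1) / (2 * lam))) with ((lam * c - 1) / 2) in Hle
      by (field; lra).
    lra. }
  exists t0. split; [lra|].
  assert (Hdiag : t0 < c * rho_ss lam t0).
  { apply Rlt_0_minus.
    replace (c * rho_ss lam t0 - t0) with (t0 * (lam * c - 1 - lam * t0) / (1 + lam * t0))
      by (unfold rho_ss; field; nra).
    apply Rdiv_lt_0_compat; nra. }
  rewrite H_rho_ss.
  pose proof (rho_ss_le lam t0 (t0 + s) Hlam ltac:(lra)).
  unfold c in Hdiag. nra.
Qed.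

Lemma H_fixed_point_exists s : 0 <= s ->
  0 < s \/ 1 < lam * (alpha + x * (1 - alpha)) ->
  exists t, 0 < t /\ H x alpha lam s t = t.
Proof.
intros Hs Hcase.
destruct (H_above_diagonal_near_0 s Hs Hcase) as [t0 [Ht0 Habove]].
destruct (Ranalysis5.IVT_interv (fun t => t - H x alpha lam s t) t0 1) as [t [Ht Hzero]].
- intros t Ht. apply continuity_pt_minus; [apply continuity_pt_id|].
  apply H_continuous; lra.
- lra.
- lra.
- pose proof (H_lt_1 s 1 Hs ltac:(lra)). lra.
- exists t. split; lra.
Qed.

End FixedPoint.

(** * Moving bounds and first-exit arguments *)

Definition relax (v0 v1 eps t0 t : R) : R := v1 + (v0 - v1) * exp (- (eps * (t - t0))).

Lemma is_derive_relax v0 v1 eps t0 t :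
  is_derive (relax v0 v1 eps t0) t (- eps * (relax v0 v1 eps t0 t - v1)).
Proof. unfold relax. auto_derive; [easy|]. unfold Rminus. ring. Qed.

Lemma relax_start v0 v1 eps t0 : relax v0 v1 eps t0 t0 = v0.
Proof. unfold relax. rewrite Rminus_diag, Rmult_0_r, Ropp_0, exp_0. ring. Qed.

Lemma relax_const v eps t0 t : relax v v eps t0 t = v.
Proof. unfold relax. ring. Qed.

Lemma exp_decay_le_1 eps t0 t : 0 <= eps -> t0 <= t -> 0 < exp (- (eps * (t - t0))) <= 1.
Proof.
intros Heps Ht. split; [apply exp_pos|]. rewrite <- exp_0.
destruct (Req_dec (eps * (t - t0)) 0) as [Hz | Hnz].
- rewrite Hz, Ropp_0. lra.
- left. apply exp_increasing. assert (0 <= eps * (t - t0)) by (apply Rmult_le_pos; lra). lra.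
Qed.

Lemma relax_between_inc v0 v1 eps t0 t : 0 <= eps -> t0 <= t -> v0 <= v1 ->
  v0 <= relax v0 v1 eps t0 t <= v1.
Proof. intros. pose proof (exp_decay_le_1 eps t0 t). unfold relax. nra. Qed.

Lemma relax_between_dec v0 v1 eps t0 t : 0 <= eps -> t0 <= t -> v1 <= v0 ->
  v1 <= relax v0 v1 eps t0 t <= v0.
Proof. intros. pose proof (exp_decay_le_1 eps t0 t). unfold relax. nra. Qed.

Lemma exp_decay_eventually_small A eps t0 tau : 0 <= A -> 0 < eps -> 0 < tau ->
  exists T, forall t, T <= t -> A * exp (- (eps * (t - t0))) <= tau.
Proof.
intros HA Heps Htau. exists (t0 + A / (eps * tau)). intros t Ht.
set (y := eps * (t - t0)).
assert (Hy : A <= tau * y).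
{ unfold y. apply Rmult_le_compat_l with (r := eps * tau) in Ht; [|nra].
  replace (eps * tau * (t0 + A / (eps * tau))) with (eps * tau * t0 + A) in Ht
    by (field; lra).
  lra. }
assert (Hexp : y <= exp y).
{ destruct (Req_dec y 0) as [-> | Hnz]; [rewrite exp_0; lra|].
  pose proof (exp_ineq1 y Hnz). lra. }
rewrite exp_Ropp. apply Rmult_le_reg_r with (exp y); [apply exp_pos|].
rewrite Rmult_assoc, Rinv_l by (apply Rgt_not_eq, exp_pos). nra.
Qed.

Lemma is_lim_of_relaxing_bounds (f : R -> R) L m0 M0 :
  0 < L -> 0 < m0 < 1 -> 1 < M0 ->
  (forall m1 M1, m0 <= m1 < 1 -> 1 < M1 <= M0 -> exists T0 eps, 0 < eps /\
     forall t, T0 <= t -> relax m0 m1 eps T0 t * L <= f t <= relax M0 M1 eps T0 t * L) ->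
  is_lim f p_infty L.
Proof.
intros HL Hm0 HM0 Hbounds. apply is_lim_spec. intros eps. simpl.
pose proof (cond_pos eps) as Heps.
set (tau := eps / (4 * L)).
assert (Htau : 0 < tau) by (apply Rdiv_lt_0_compat; lra).
assert (HtauL : 4 * tau * L = eps) by (unfold tau; field; lra).
pose proof (Rmax_l m0 (1 - tau)). pose proof (Rmax_r m0 (1 - tau)).
pose proof (Rmin_l M0 (1 + tau)). pose proof (Rmin_r M0 (1 + tau)).
set (m1 := Rmax m0 (1 - tau)) in *. set (M1 := Rmin M0 (1 + tau)) in *.
destruct (Hbounds m1 M1) as [T0 [r [Hr Hb]]].
{ split; [lra|]. apply Rmax_lub_lt; lra. }
{ split; [apply Rmin_glb_lt|]; lra. }
destruct (exp_decay_eventually_small (m1 - m0 + (M0 - M1)) r T0 tau) as [T HT];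
  [lra|exact Hr|exact Htau|].
exists (Rmax T T0). intros t Ht.
pose proof (Rmax_l T T0). pose proof (Rmax_r T T0).
specialize (HT t ltac:(lra)). specialize (Hb t ltac:(lra)). unfold relax in Hb.
set (e := exp (- (r * (t - T0)))) in *.
assert (He : 0 < e) by apply exp_pos.
assert ((m1 - m0) * e <= tau) by nra.
assert ((M0 - M1) * e <= tau) by nra.
apply Rabs_def1; nra.
Qed.

Lemma is_lim_eventually_within (f : R -> R) (L : R) : is_lim f p_infty L ->
  forall eta, 0 < eta -> exists T, 0 <= T /\ forall t, T <= t -> L - eta <= f t <= L + eta.
Proof.
intros Hlim eta Heta. apply is_lim_spec in Hlim. unfold is_lim' in Hlim.
destruct (Hlim (mkposreal eta Heta)) as [M HM]. simpl in HM.
exists (Rmax 0 (M + 1)). split; [apply Rmax_l|]. intros t Ht.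
pose proof (Rmax_r 0 (M + 1)).
specialize (HM t ltac:(lra)). apply Rabs_def2 in HM. lra.
Qed.

Lemma is_lim_eventually_band (f : R -> R) (L : R) m1 M1 eta :
  is_lim f p_infty L -> 0 <= L -> (forall t, 0 <= t -> 0 <= f t) ->
  m1 < 1 -> 1 <= M1 -> 0 < eta ->
  exists T, 0 <= T /\ forall t, T <= t -> m1 * L <= f t <= M1 * L + eta.
Proof.
intros Hlim HL Hpos Hm1 HM1 Heta.
destruct HL as [HL | <-].
- destruct (is_lim_eventually_within f L Hlim (Rmin eta ((1 - m1) * L))) as [T [HT Hnear]].
  { apply Rmin_pos; [lra | apply Rmult_lt_0_compat; lra]. }
  exists T. split; [exact HT|]. intros t Ht. specialize (Hnear t Ht).
  pose proof (Rmin_l eta ((1 - m1) * L)). pose proof (Rmin_r eta ((1 - m1) * L)).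
  split; nra.
- destruct (is_lim_eventually_within f 0 Hlim eta Heta) as [T [HT Hnear]].
  exists T. split; [exact HT|]. intros t Ht. specialize (Hnear t Ht).
  specialize (Hpos t ltac:(lra)). lra.
Qed.

Lemma continuity_pt_eps (g : R -> R) t : continuity_pt g t ->
  forall e, 0 < e -> exists d, 0 < d /\ forall s, Rabs (s - t) < d -> Rabs (g s - g t) < e.
Proof.
intros Hc e He. destruct (proj1 (continuity_pt_locally g t) Hc (mkposreal e He)) as [d Hd].
exists d. split; [apply cond_pos|]. intros s Hs. apply Hd. exact Hs.
Qed.

Lemma continuity_pt_of_is_derive (g : R -> R) t l : is_derive g t l -> continuity_pt g t.
Proof. intros Hd. apply derivable_continuous_pt. exists l. apply is_derive_Reals, Hd. Qed.

Lemma is_derive_Rminus (f g : R -> R) t df dg :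
  is_derive f t df -> is_derive g t dg -> is_derive (fun s => f s - g s) t (df - dg).
Proof. intros Hf Hg. exact (is_derive_minus f g t df dg Hf Hg). Qed.

Lemma is_derive_nonpos_after_root (g : R -> R) t l : is_derive g t l -> l < 0 -> g t = 0 ->
  exists eta, 0 < eta /\ forall s, t < s < t + eta -> g s <= 0.
Proof.
intros Hd Hl Hroot. apply is_derive_Reals in Hd.
destruct (Hd (- l / 2)) as [d Hdiff]; [lra|].
exists d. split; [apply cond_pos|]. intros s Hs.
specialize (Hdiff (s - t) ltac:(lra) ltac:(rewrite Rabs_right; lra)).
replace (t + (s - t)) with s in Hdiff by ring. rewrite Hroot, Rminus_0_r in Hdiff.
apply Rabs_def2 in Hdiff.
assert (g s / (s - t) < 0) by lra.
replace (g s) with (g s / (s - t) * (s - t)) by (field; lra). nra.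
Qed.

Lemma nonpos_just_after (gs : list (R -> R)) T :
  (forall g, In g gs -> continuity_pt g T) ->
  (forall g, In g gs -> g T <= 0) ->
  (forall g, In g gs -> g T = 0 ->
     exists eta, 0 < eta /\ forall s, T < s < T + eta -> g s <= 0) ->
  exists eta, 0 < eta /\ forall g, In g gs -> forall s, T < s < T + eta -> g s <= 0.
Proof.
induction gs as [|g gs IH]; intros Hcont Hnonpos Hroot.
{ exists 1. split; [lra|]. intros g []. }
destruct IH as [eta1 [Heta1 Hafter1]]; try (intros h Hh; auto with datatypes).
assert (Hg : exists eta, 0 < eta /\ forall s, T < s < T + eta -> g s <= 0).
{ destruct (Hnonpos g (in_eq g gs)) as [Hneg | Hzero]; [|exact (Hroot g (in_eq g gs) Hzero)].
  destruct (continuity_pt_eps g T (Hcont g (in_eq g gs)) (- g T)) as [d [Hd Hnear]]; [lra|].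
  exists d. split; [exact Hd|]. intros s Hs.
  specialize (Hnear s ltac:(rewrite Rabs_right; lra)). apply Rabs_def2 in Hnear. lra. }
destruct Hg as [eta2 [Heta2 Hafter2]].
exists (Rmin eta1 eta2). split; [apply Rmin_pos; assumption|].
pose proof (Rmin_l eta1 eta2). pose proof (Rmin_r eta1 eta2).
intros h [<- | Hh] s Hs; [apply Hafter2 | apply Hafter1]; auto; lra.
Qed.

(* First-exit-time argument: the supremum of the times up to which all [g] stay
   nonpositive cannot be finite. *)
Lemma nonpos_barrier (gs : list (R -> R)) t0 :
  (forall g, In g gs -> forall t, t0 <= t -> continuity_pt g t) ->
  (forall g, In g gs -> g t0 <= 0) ->
  (forall t, t0 <= t -> (forall h, In h gs -> h t <= 0) -> forall g, In g gs -> g t = 0 ->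
     exists eta, 0 < eta /\ forall s, t < s < t + eta -> g s <= 0) ->
  forall t, t0 <= t -> forall g, In g gs -> g t <= 0.
Proof.
intros Hcont Hinit Hexit t1 Ht1 g1 Hg1.
destruct (Rle_dec (g1 t1) 0) as [|Hpos]; [assumption|exfalso].
set (E := fun s => t0 <= s /\ forall u, t0 <= u <= s -> forall h, In h gs -> h u <= 0).
assert (HEt0 : E t0).
{ split; [lra|]. intros u Hu h Hh. replace u with t0 by lra. auto. }
assert (HEbound : bound E).
{ exists t1. intros s [Hs Hall]. destruct (Rle_dec s t1) as [|Hgt]; [assumption|].
  exfalso. apply Hpos, Hall; auto; lra. }
destruct (completeness E HEbound (ex_intro _ t0 HEt0)) as [T [HTub HTlub]].
assert (HT0 : t0 <= T) by (apply HTub; exact HEt0).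
assert (Hbefore : forall u, t0 <= u < T -> forall h, In h gs -> h u <= 0).
{ intros u Hu h Hh. destruct (Rle_dec (h u) 0) as [|Hn]; [assumption|exfalso].
  assert (T <= u); [|lra]. apply HTlub. intros s [Hs Hall].
  destruct (Rle_dec s u) as [|Hsu]; [assumption|]. exfalso. apply Hn, Hall; auto; lra. }
assert (HatT : forall h, In h gs -> h T <= 0).
{ intros h Hh. destruct (Rle_dec (h T) 0) as [|Hn]; [assumption|exfalso].
  destruct HT0 as [HT0 | <-]; [|exact (Hn (Hinit h Hh))].
  destruct (continuity_pt_eps h T (Hcont h Hh T ltac:(lra)) (h T)) as [d [Hd Hnear]]; [lra|].
  pose proof (Rmax_l t0 (T - d / 2)). pose proof (Rmax_r t0 (T - d / 2)).
  set (u := Rmax t0 (T - d / 2)) in *.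
  assert (Hu : u < T) by (apply Rmax_lub_lt; lra).
  specialize (Hnear u ltac:(rewrite Rabs_left; lra)). apply Rabs_def2 in Hnear.
  pose proof (Hbefore u ltac:(lra) h Hh). lra. }
destruct (nonpos_just_after gs T) as [eta [Heta Hafter]];
  [intros h Hh; apply Hcont; auto | exact HatT | intros h Hh; apply Hexit; auto|].
assert (HE : E (T + eta / 2)).
{ split; [lra|]. intros u Hu h Hh.
  destruct (Rtotal_order u T) as [Hlt | [-> | Hgt]].
  - apply Hbefore; auto; lra.
  - auto.
  - apply Hafter; auto; lra. }
apply HTub in HE. lra.
Qed.

(** * Invariant boxes for groups of agents *)

Lemma list_pos_lower_bound {A : Type} (f : A -> R) (l : list A) :
  exists e, 0 < e /\ forall a, In a l -> f a <= 0 \/ e <= f a.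
Proof.
induction l as [|a l [e [He Hl]]].
- exists 1. split; [lra|]. intros a [].
- destruct (Rle_dec (f a) 0) as [Ha | Ha].
  + exists e. split; [exact He|]. intros b [<- | Hb]; auto.
  + exists (Rmin e (f a)). split; [apply Rmin_pos; lra|].
    pose proof (Rmin_l e (f a)). pose proof (Rmin_r e (f a)).
    intros b [<- | Hb]; [right; lra|].
    destruct (Hl b Hb); [left | right]; lra.
Qed.

(* A group of agents of mass [mass] in which the fraction [belief] believing a message
   evolves by [belief' = mass * ((1 - belief) k nu exposure - belief delta)], where
   [exposure] is the prevalence of the messages this group believes. *)
Record compartment := Compartment {
  belief : R -> R;
  mass : R;
  belief_ss : R;
  exposure : R -> R;
  exposure_ss : R }.

(* Gaps are weighted by the mass of the group, so that a group of mass 0 (e.g. when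
   x = 0) imposes no constraint. *)
Definition lower_gap (c : compartment) (m t : R) : R := mass c * (m * belief_ss c - belief c t).
Definition upper_gap (c : compartment) (M t : R) : R := mass c * (belief c t - M * belief_ss c).

Definition in_box (cs : list compartment) (m M t : R) : Prop :=
  forall c, In c cs -> lower_gap c m t <= 0 /\ upper_gap c M t <= 0.

Lemma is_derive_lower_gap c (m : R -> R) t dm du :
  is_derive m t dm -> is_derive (belief c) t du ->
  is_derive (fun s => lower_gap c (m s) s) t (mass c * (dm * belief_ss c - du)).
Proof.
intros Hm Hu. unfold lower_gap. apply is_derive_scal.
apply (is_derive_minus (fun s => m s * belief_ss c) (belief c)); [|exact Hu].
exact (is_derive_scal_l m t dm (belief_ss c) Hm).
Qed.

Lemma is_derive_upper_gap c (M : R -> R) t dM du :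
  is_derive M t dM -> is_derive (belief c) t du ->
  is_derive (fun s => upper_gap c (M s) s) t (mass c * (du - dM * belief_ss c)).
Proof.
intros HM Hu. unfold upper_gap. apply is_derive_scal.
apply (is_derive_minus (belief c) (fun s => M s * belief_ss c)); [exact Hu|].
exact (is_derive_scal_l M t dM (belief_ss c) HM).
Qed.

(* By the balance equation, on the face u = M us the drift is at most
   -M (M - 1) us k nu Is plus the slack eta, which beats the inward speed
   r (M - M1) us of the face. *)
Lemma upper_face_slope_neg k nu dl w us Is I M M1 eta r :
  0 < k * nu -> 0 < dl -> 0 < us -> 0 < Is -> 0 < w ->
  (1 - us) * (k * nu) * Is = us * dl ->
  1 < M1 <= M -> 0 <= I <= M * Is + eta -> 0 <= eta < (M1 - 1) * us * Is ->
  r <= w * Rmin (k * nu * Is) dl ->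
  w * ((1 - M * us) * k * nu * I - M * us * dl) - - r * (M - M1) * us < 0.
Proof.
intros Hknu Hdl Hus HIs Hw Hss HM HI Heta Hr.
replace ((1 - M * us) * k * nu * I) with ((1 - M * us) * (k * nu) * I) by ring.
pose proof (Rmin_l (k * nu * Is) dl). pose proof (Rmin_r (k * nu * Is) dl).
set (c := Rmin (k * nu * Is) dl) in *. set (K := k * nu) in *.
assert (Hdrift : (1 - M * us) * K * I - M * us * dl < - (M - M1) * us * c).
{ destruct (Rle_lt_dec 0 (1 - M * us)) as [Hsub | Hsuper].
  - assert (Hgrow : (1 - M * us) * K * I <= (1 - M * us) * K * (M * Is + eta))
      by (apply Rmult_le_compat_l; nra).
    assert (Hbal : (1 - M * us) * K * (M * Is + eta) - M * us * dl
                   = - M * (M - 1) * us * (K * Is) + K * eta * (1 - M * us))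
      by (replace (M * us * dl) with (M * (us * dl)) by ring; rewrite <- Hss; ring).
    assert (0 <= K * eta) by nra. assert (0 <= M * us) by nra.
    assert (K * eta * (1 - M * us) <= K * eta) by nra.
    assert (K * eta < K * ((M1 - 1) * us * Is)) by (apply Rmult_lt_compat_l; lra).
    assert (HKIs : 0 < K * Is) by (apply Rmult_lt_0_compat; lra).
    assert (0 <= (M - 1) * us * (K * Is)) by (apply Rmult_le_pos; nra).
    assert ((M - 1) * us * (K * Is) <= M * (M - 1) * us * (K * Is)) by nra.
    assert (0 <= (M - M1) * us) by nra.
    assert ((M - M1) * us * c <= (M - M1) * us * (K * Is)) by (apply Rmult_le_compat_l; lra).
    nra.
  - assert (0 <= K * I) by nra.
    assert ((1 - M * us) * K * I <= 0) by nra.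
    assert (0 <= (M - M1) * us) by nra.
    assert ((M - M1) * us * c <= (M - M1) * us * dl) by (apply Rmult_le_compat_l; lra).
    assert ((M - M1) * us * dl < M * us * dl) by (apply Rmult_lt_compat_r; nra).
    nra. }
assert (w * ((1 - M * us) * K * I - M * us * dl) < w * (- (M - M1) * us * c))
  by (apply Rmult_lt_compat_l; assumption).
assert (r * ((M - M1) * us) <= w * c * ((M - M1) * us)) by (apply Rmult_le_compat_r; nra).
lra.
Qed.

Lemma lower_face_slope_neg k nu dl w us Is I m m0 m1 r :
  0 < k * nu -> 0 < dl -> 0 < us < 1 -> 0 < Is -> 0 < w ->
  (1 - us) * (k * nu) * Is = us * dl ->
  0 < m0 <= m -> m <= m1 < 1 -> m * Is <= I -> r <= w * m0 * (k * nu * Is) ->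
  - r * (m - m1) * us - w * ((1 - m * us) * k * nu * I - m * us * dl) < 0.
Proof.
intros Hknu Hdl Hus HIs Hw Hss Hm Hm1 HI Hr.
replace ((1 - m * us) * k * nu * I) with ((1 - m * us) * (k * nu) * I) by ring.
set (K := k * nu) in *.
assert (Hsub : 0 < 1 - m * us) by nra.
assert (Hgrow : (1 - m * us) * K * (m * Is) <= (1 - m * us) * K * I)
  by (apply Rmult_le_compat_l; nra).
assert (Hbal : (1 - m * us) * K * (m * Is) - m * us * dl = m * (1 - m) * (us * (K * Is)))
  by (replace (m * us * dl) with (m * (us * dl)) by ring; rewrite <- Hss; ring).
assert (HKIs : 0 < K * Is) by (apply Rmult_lt_0_compat; lra).
assert (HusKIs : 0 < us * (K * Is)) by (apply Rmult_lt_0_compat; lra).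
assert (m0 * (m1 - m) < m * (1 - m)) by nra.
assert (r * ((m1 - m) * us) <= w * m0 * (K * Is) * ((m1 - m) * us))
  by (apply Rmult_le_compat_r; nra).
assert (w * (m0 * (m1 - m)) * (us * (K * Is)) < w * (m * (1 - m)) * (us * (K * Is)))
  by (apply Rmult_lt_compat_r; [lra|]; apply Rmult_lt_compat_l; lra).
assert (w * (m * (1 - m) * (us * (K * Is)))
        <= w * ((1 - m * us) * K * I - m * us * dl)) by (apply Rmult_le_compat_l; lra).
nra.
Qed.

Section RelaxingBox.

Variables (k nu dl : R) (cs : list compartment) (t0 m0 m1 M0 M1 eta : R).
Hypotheses (Hknu : 0 < k * nu) (Hdl : 0 < dl) (Heta : 0 <= eta)
  (Hm : 0 < m0 <= m1) (Hm1 : m1 < 1) (HM : 1 < M1 <= M0).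

Hypothesis Hss : forall c, In c cs ->
  0 <= mass c /\ 0 < belief_ss c < 1 /\ 0 < exposure_ss c /\
  (1 - belief_ss c) * (k * nu) * exposure_ss c = belief_ss c * dl /\
  eta < (M1 - 1) * belief_ss c * exposure_ss c.

Hypothesis Hdyn : forall c, In c cs -> forall t, t0 <= t ->
  is_derive (belief c) t
    (mass c * ((1 - belief c t) * k * nu * exposure c t - belief c t * dl)).

Hypothesis Hexposure : forall t m M, t0 <= t -> m0 <= m <= m1 -> M1 <= M <= M0 ->
  in_box cs m M t -> forall c, In c cs ->
  m * exposure_ss c <= exposure c t <= M * exposure_ss c + eta.

Hypothesis Hinit : in_box cs m0 M0 t0.

Section AtRate.

Variable eps : R.
Hypothesis Heps : 0 < eps.
Hypothesis Hrate : forall c, In c cs ->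
  mass c = 0 \/ eps <= mass c * m0 * Rmin (k * nu * exposure_ss c) dl.

Let mf := relax m0 m1 eps t0.
Let Mf := relax M0 M1 eps t0.

Let Hmf t : t0 <= t -> m0 <= mf t <= m1.
Proof. intros. apply relax_between_inc; lra. Qed.

Let HMf t : t0 <= t -> M1 <= Mf t <= M0.
Proof. intros. apply relax_between_dec; lra. Qed.

Lemma lower_gap_nonpos_after_root c t : In c cs -> t0 <= t ->
  in_box cs (mf t) (Mf t) t -> lower_gap c (mf t) t = 0 ->
  exists e, 0 < e /\ forall s, t < s < t + e -> lower_gap c (mf s) s <= 0.
Proof.
intros Hc Ht Hbox Hroot.
destruct (Hss c Hc) as [_ [Hus [HIs [Hbal _]]]].
destruct (Hexposure t (mf t) (Mf t) Ht (Hmf t Ht) (HMf t Ht) Hbox c Hc) as [HIlo _].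
destruct (Hrate c Hc) as [Hw0 | Hrate_c].
{ exists 1. split; [lra|]. intros s _. unfold lower_gap. rewrite Hw0. lra. }
pose proof (Rmin_l (k * nu * exposure_ss c) dl).
assert (Hmin : 0 < m0 * Rmin (k * nu * exposure_ss c) dl)
  by (apply Rmult_lt_0_compat; [lra | apply Rmin_pos; nra]).
assert (Hw : 0 < mass c) by (rewrite Rmult_assoc in Hrate_c; nra).
assert (Hat : belief c t = mf t * belief_ss c) by (unfold lower_gap in Hroot; nra).
eapply is_derive_nonpos_after_root;
  [exact (is_derive_lower_gap c mf t _ _ (is_derive_relax _ _ _ _ _) (Hdyn c Hc t Ht)) | |
   exact Hroot].
fold mf. rewrite Hat, <- (Rmult_0_r (mass c)). apply Rmult_lt_compat_l; [exact Hw|].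
destruct (Hmf t Ht) as [Hmf0 Hmf1].
apply (lower_face_slope_neg k nu dl _ _ (exposure_ss c) _ _ m0); try assumption; try lra.
apply Rle_trans with (1 := Hrate_c). apply Rmult_le_compat_l; [nra | assumption].
Qed.

Lemma upper_gap_nonpos_after_root c t : In c cs -> t0 <= t ->
  in_box cs (mf t) (Mf t) t -> upper_gap c (Mf t) t = 0 ->
  exists e, 0 < e /\ forall s, t < s < t + e -> upper_gap c (Mf s) s <= 0.
Proof.
intros Hc Ht Hbox Hroot.
destruct (Hss c Hc) as [_ [Hus [HIs [Hbal Heta_c]]]].
destruct (Hexposure t (mf t) (Mf t) Ht (Hmf t Ht) (HMf t Ht) Hbox c Hc) as [HIlo HIhi].
destruct (Hrate c Hc) as [Hw0 | Hrate_c].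
{ exists 1. split; [lra|]. intros s _. unfold upper_gap. rewrite Hw0. lra. }
assert (Hmin : 0 < Rmin (k * nu * exposure_ss c) dl) by (apply Rmin_pos; nra).
assert (Hw : 0 < mass c)
  by (assert (0 < m0 * Rmin (k * nu * exposure_ss c) dl) by (apply Rmult_lt_0_compat; lra);
      rewrite Rmult_assoc in Hrate_c; nra).
assert (Hat : belief c t = Mf t * belief_ss c) by (unfold upper_gap in Hroot; nra).
eapply is_derive_nonpos_after_root;
  [exact (is_derive_upper_gap c Mf t _ _ (is_derive_relax _ _ _ _ _) (Hdyn c Hc t Ht)) | |
   exact Hroot].
fold Mf. rewrite Hat, <- (Rmult_0_r (mass c)). apply Rmult_lt_compat_l; [exact Hw|].
destruct (Hmf t Ht) as [Hmf0 _]. destruct (HMf t Ht) as [HMf1 _].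
apply (upper_face_slope_neg k nu dl _ _ (exposure_ss c) _ _ M1 eta); try assumption; nra.
Qed.

Lemma in_relaxing_box t : t0 <= t -> in_box cs (mf t) (Mf t) t.
Proof.
set (gaps := flat_map (fun c => [fun t => lower_gap c (mf t) t; fun t => upper_gap c (Mf t) t]) cs).
assert (Hgaps : forall g, In g gaps -> exists c, In c cs /\
          (g = (fun t => lower_gap c (mf t) t) \/ g = (fun t => upper_gap c (Mf t) t))).
{ intros g Hg. apply in_flat_map in Hg as [c [Hc [<- | [<- | []]]]]; eauto. }
assert (Hin : forall c, In c cs ->
          In (fun t => lower_gap c (mf t) t) gaps /\ In (fun t => upper_gap c (Mf t) t) gaps).
{ intros c Hc. split; apply in_flat_map; exists c; simpl; auto. }
assert (Hnonpos : forall t, t0 <= t -> forall g, In g gaps -> g t <= 0).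
{ apply nonpos_barrier.
  - intros g Hg t' Ht'. destruct (Hgaps g Hg) as [c [Hc [-> | ->]]];
      eapply continuity_pt_of_is_derive.
    + exact (is_derive_lower_gap c mf t' _ _ (is_derive_relax _ _ _ _ _) (Hdyn c Hc t' Ht')).
    + exact (is_derive_upper_gap c Mf t' _ _ (is_derive_relax _ _ _ _ _) (Hdyn c Hc t' Ht')).
  - intros g Hg. destruct (Hgaps g Hg) as [c [Hc [-> | ->]]];
      unfold mf, Mf; rewrite relax_start; apply (Hinit c Hc).
  - intros t' Ht' Hall g Hg Hroot.
    assert (Hbox : in_box cs (mf t') (Mf t') t').
    { intros c Hc. destruct (Hin c Hc) as [Hlo Hhi]. exact (conj (Hall _ Hlo) (Hall _ Hhi)). }
    destruct (Hgaps g Hg) as [c [Hc [-> | ->]]].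
    + exact (lower_gap_nonpos_after_root c t' Hc Ht' Hbox Hroot).
    + exact (upper_gap_nonpos_after_root c t' Hc Ht' Hbox Hroot). }
intros Ht c Hc. destruct (Hin c Hc) as [Hlo Hhi].
exact (conj (Hnonpos t Ht _ Hlo) (Hnonpos t Ht _ Hhi)).
Qed.

End AtRate.

Lemma relaxing_box_invariant : exists eps, 0 < eps /\
  forall t, t0 <= t -> in_box cs (relax m0 m1 eps t0 t) (relax M0 M1 eps t0 t) t.
Proof.
destruct (list_pos_lower_bound (fun c => mass c * m0 * Rmin (k * nu * exposure_ss c) dl) cs)
  as [eps [Heps Hrate]].
exists eps. split; [exact Heps|]. apply in_relaxing_box; [exact Heps|].
intros c Hc. destruct (Hss c Hc) as [Hw [_ [HIs _]]].
assert (0 < m0 * Rmin (k * nu * exposure_ss c) dl)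
  by (apply Rmult_lt_0_compat; [lra|]; apply Rmin_pos; nra).
destruct (Hrate c Hc) as [Hle | Hge]; [left; nra | right; exact Hge].
Qed.

End RelaxingBox.

(** * The rumor and truth dynamics *)

Definition rumor_compartment (x alpha : R) (d : R -> R) (ds : R) : compartment :=
  Compartment d ((1 - x) * (1 - alpha)) ds (fun t => theta1 x alpha (d t))
    ((1 - x) * (1 - alpha) * ds).

(* Inspecting agents adopt the truth on hearing either message, hence the exposure
   th0 + th1 of the groups a and c. *)
Definition truth_compartments (x alpha : R) (a b c d : R -> R) (as_ bs th0s s : R) :=
  let th0 t := theta0 x alpha (a t) (b t) (c t) in
  [Compartment a (x * alpha) as_ (fun t => th0 t + theta1 x alpha (d t)) (th0s + s);
   Compartment b (x * (1 - alpha)) bs th0 th0s;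
   Compartment c ((1 - x) * alpha) as_ (fun t => th0 t + theta1 x alpha (d t)) (th0s + s)].

Lemma theta0_in_box x alpha a b c d as_ bs th0s s m M t :
  th0s = x * alpha * as_ + x * (1 - alpha) * bs + (1 - x) * alpha * as_ ->
  in_box (truth_compartments x alpha a b c d as_ bs th0s s) m M t ->
  m * th0s <= theta0 x alpha (a t) (b t) (c t) <= M * th0s.
Proof.
intros Hth0s Hbox.
destruct (Hbox _ (in_eq _ _)) as [Ha1 Ha2].
destruct (Hbox _ (in_cons _ _ _ (in_eq _ _))) as [Hb1 Hb2].
destruct (Hbox _ (in_cons _ _ _ (in_cons _ _ _ (in_eq _ _)))) as [Hc1 Hc2].
unfold lower_gap, upper_gap in *; simpl in *.
unfold theta0. rewrite Hth0s. lra.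
Qed.

Lemma subcritical_upper_slope_neg k nu dl w u : 0 < k * nu -> 0 < w -> k * nu * w <= dl ->
  0 < u -> w * ((1 - u) * k * nu * (w * u) - u * dl) - - (k * nu * w ^ 2 / 2) * u ^ 2 < 0.
Proof.
intros Hknu Hw Hsub Hu.
assert (0 < w * u) by (apply Rmult_lt_0_compat; lra).
assert (w * u * (k * nu * w - dl) <= 0) by nra.
assert (0 < k * nu * w ^ 2 * u ^ 2)
  by (apply Rmult_lt_0_compat; [apply Rmult_lt_0_compat; [|apply pow_lt] | apply pow_lt]; lra).
nra.
Qed.

Lemma subcritical_lower_slope_neg k nu dl w u : 0 < k * nu -> 0 < w -> 0 < u <= 1 ->
  - (w * dl + 1) * u - w * ((1 - u) * k * nu * (w * u) - u * dl) < 0.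
Proof.
intros Hknu Hw Hu.
assert (0 <= (1 - u) * (k * nu) * w ^ 2 * u)
  by (apply Rmult_le_pos; [apply Rmult_le_pos; [apply Rmult_le_pos | apply pow_le] |]; lra).
nra.
Qed.

Section Solution.

Variables (x alpha k nu dl : R) (a b c d : R -> R).
Hypotheses (Hx : 0 <= x < 1) (Halpha : 0 < alpha < 1) (Hknu : 0 < k * nu) (Hdl : 0 < dl).
Hypothesis Hsol : is_solution x alpha k nu dl a b c d.

Let w := (1 - x) * (1 - alpha).
Let s := theta1_ss x alpha (k * nu / dl).

Lemma theta1_ss_cases : (0 < s /\ s = w - dl / (k * nu)) \/ (s = 0 /\ k * nu * w <= dl).
Proof.
unfold s, theta1_ss.
replace (/ (k * nu / dl)) with (dl / (k * nu)) by (field; nra).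
replace ((1 - alpha) * (1 - x)) with w by (unfold w; ring).
destruct (Rle_dec (w - dl / (k * nu)) 0) as [Hle | Hgt].
- right. rewrite Rmax_right by lra. split; [reflexivity|].
  apply Rmult_le_compat_l with (r := k * nu) in Hle; [|lra].
  replace (k * nu * (w - dl / (k * nu))) with (k * nu * w - dl) in Hle by (field; nra). lra.
- left. rewrite Rmax_left by lra. split; lra.
Qed.

Lemma rumor_relaxes (Hend : 0 < s) (Hs : s = w - dl / (k * nu)) (Hd0 : 0 < d 0) :
  let ds := s / w in
  let m0 := Rmin (1/2) (d 0 / ds) in
  let M0 := 2 + d 0 / ds in
  forall m1 M1, m0 <= m1 < 1 -> 1 < M1 <= M0 -> exists eps, 0 < eps /\ forall t, 0 <= t ->
    relax m0 m1 eps 0 t * s <= theta1 x alpha (d t) <= relax M0 M1 eps 0 t * s.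
Proof.
intros ds m0 M0 m1 M1 Hm1 HM1.
assert (Hw : 0 < w) by (unfold w; nra).
assert (Hds : 0 < ds < 1).
{ unfold ds. split; [apply Rdiv_lt_0_compat; lra|].
  apply Rmult_lt_reg_r with w; [lra|]. unfold Rdiv. rewrite Rmult_assoc, Rinv_l by lra.
  assert (0 < dl / (k * nu)) by (apply Rdiv_lt_0_compat; lra). lra. }
assert (Hwds : w * ds = s) by (unfold ds; field; lra).
pose proof (Rmin_l (1/2) (d 0 / ds)) as Hm0half. pose proof (Rmin_r (1/2) (d 0 / ds)) as Hm0d.
fold m0 in Hm0half, Hm0d.
assert (Hm0 : 0 < m0) by (apply Rmin_pos; [lra | apply Rdiv_lt_0_compat; lra]).
assert (Hd0ds : d 0 / ds * ds = d 0) by (field; lra).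
destruct (relaxing_box_invariant k nu dl [rumor_compartment x alpha d ds] 0 m0 m1 M0 M1 0)
  as [eps [Heps Hbox]]; try (simpl; lra).
- intros cc [<- | []]; simpl. fold w.
  assert (Hbal : (1 - ds) * (k * nu) * (w * ds) = ds * dl).
  { rewrite Hwds. unfold ds. rewrite Hs. field. repeat split; nra. }
  assert (0 < w * ds) by (apply Rmult_lt_0_compat; lra).
  assert (0 < (M1 - 1) * ds * (w * ds))
    by (apply Rmult_lt_0_compat; [apply Rmult_lt_0_compat|]; lra).
  repeat split; lra.
- intros cc [<- | []] t Ht. apply Hsol; exact Ht.
- intros t m M _ _ _ Hbox cc [<- | []]. destruct (Hbox _ (in_eq _ _)) as [Hlo Hhi].
  unfold lower_gap, upper_gap in Hlo, Hhi; simpl in Hlo, Hhi |- *. unfold theta1. lra.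
- intros cc [<- | []]. unfold lower_gap, upper_gap; simpl.
  assert (m0 * ds <= d 0) by (rewrite <- Hd0ds; apply Rmult_le_compat_r; lra).
  assert (d 0 <= M0 * ds) by (unfold M0; lra).
  unfold w in Hw. split; nra.
- exists eps. split; [exact Heps|]. intros t Ht.
  destruct (Hbox t Ht _ (in_eq _ _)) as [Hlo Hhi].
  unfold lower_gap, upper_gap in Hlo, Hhi; simpl in Hlo, Hhi.
  rewrite <- Hwds. unfold w, theta1. split; lra.
Qed.

Lemma rumor_endemic (Hend : 0 < s) (Hs : s = w - dl / (k * nu)) (Hd0 : 0 < d 0) :
  exists m0 B, 0 < m0 < 1 /\
  (forall t, 0 <= t -> m0 * s <= theta1 x alpha (d t) <= B) /\
  is_lim (fun t => theta1 x alpha (d t)) p_infty s.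
Proof.
pose proof (rumor_relaxes Hend Hs Hd0) as Hrelax. cbv zeta in Hrelax.
set (ds := s / w) in Hrelax.
assert (Hds : 0 < ds) by (apply Rdiv_lt_0_compat; [lra | unfold w; nra]).
set (m0 := Rmin (1/2) (d 0 / ds)) in Hrelax. set (M0 := 2 + d 0 / ds) in Hrelax.
assert (Hm0 : 0 < m0 < 1).
{ pose proof (Rmin_l (1/2) (d 0 / ds)) as Hhalf. fold m0 in Hhalf.
  split; [apply Rmin_pos; [lra | apply Rdiv_lt_0_compat; lra] | lra]. }
assert (HM0 : 1 < M0) by (unfold M0; assert (0 < d 0 / ds) by (apply Rdiv_lt_0_compat; lra); lra).
exists m0, (M0 * s). split; [exact Hm0|]. split.
- destruct (Hrelax m0 M0) as [eps [_ Hb]]; [lra | lra |].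
  intros t Ht. specialize (Hb t Ht). rewrite !relax_const in Hb. exact Hb.
- apply (is_lim_of_relaxing_bounds _ s m0 M0 Hend Hm0 HM0).
  intros m1 M1 Hm1 HM1. destruct (Hrelax m1 M1 Hm1 HM1) as [eps [Heps Hb]].
  exists 0, eps. split; [exact Heps | exact Hb].
Qed.

(* Below the threshold d' <= - k nu w^2 d^2, so d is dominated by 1 / (1 + gam t); the
   factor 1/2 in gam makes the comparison strict.  The exponential lower barrier only
   keeps d positive. *)
Lemma rumor_vanishing_bounds (Hsub : k * nu * w <= dl) (Hd0 : 0 < d 0 <= 1) :
  let gam := k * nu * w ^ 2 / 2 in
  forall t, 0 <= t -> 0 < d t <= / (1 + gam * t).
Proof.
intros gam.
assert (Hw : 0 < w) by (unfold w; nra).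
assert (Hgam : 0 < gam).
{ unfold gam. apply Rdiv_lt_0_compat; [apply Rmult_lt_0_compat; [lra | apply pow_lt; lra] | lra]. }
set (C := w * dl + 1).
set (upper := fun t => / (1 + gam * t)). set (lower := fun t => d 0 * exp (- (C * t))).
assert (Hupper : forall t, 0 <= t -> is_derive upper t (- gam * upper t ^ 2)).
{ intros t Ht. unfold upper. auto_derive; [nra|]. field. nra. }
assert (Hlower : forall t, is_derive lower t (- C * lower t)).
{ intros t. unfold lower. auto_derive; [easy|]. ring. }
assert (Hdyn : forall t, 0 <= t ->
          is_derive d t (w * ((1 - d t) * k * nu * (w * d t) - d t * dl))) by apply Hsol.
assert (Hbounds : forall t, 0 <= t ->
          forall g, In g [fun t => d t - upper t; fun t => lower t - d t] -> g t <= 0).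
{ apply nonpos_barrier.
  - intros g [<- | [<- | []]] t Ht; apply continuity_pt_minus; eapply continuity_pt_of_is_derive;
      eauto.
  - intros g [<- | [<- | []]]; unfold upper, lower;
      rewrite ?Rmult_0_r, ?Rplus_0_r, ?Rinv_1, ?Ropp_0, ?exp_0; lra.
  - intros t Ht Hall g Hg Hroot.
    pose proof (Hall _ (in_eq _ _)) as Hle_up.
    pose proof (Hall _ (in_cons _ _ _ (in_eq _ _))) as Hge_lo.
    simpl in Hle_up, Hge_lo.
    assert (Hlo_pos : 0 < lower t) by (unfold lower; pose proof (exp_pos (- (C * t))); nra).
    assert (Hup_le1 : upper t <= 1).
    { unfold upper. rewrite <- Rinv_1. apply Rinv_le_contravar; nra. }
    destruct Hg as [<- | [<- | []]]; simpl in Hroot.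
    + eapply is_derive_nonpos_after_root;
        [exact (is_derive_Rminus _ _ _ _ _ (Hdyn t Ht) (Hupper t Ht)) | | exact Hroot].
      replace (upper t) with (d t) by lra.
      apply subcritical_upper_slope_neg; lra.
    + eapply is_derive_nonpos_after_root;
        [exact (is_derive_Rminus _ _ _ _ _ (Hlower t) (Hdyn t Ht)) | | exact Hroot].
      replace (lower t) with (d t) by lra.
      apply subcritical_lower_slope_neg; lra. }
intros t Ht. pose proof (Hbounds t Ht _ (in_eq _ _)) as Hup.
pose proof (Hbounds t Ht _ (in_cons _ _ _ (in_eq _ _))) as Hlo. simpl in Hup, Hlo.
pose proof (exp_pos (- (C * t))). unfold upper, lower in *. split; nra.
Qed.

Lemma rumor_vanishing (Hsub : k * nu * w <= dl) (Hd0 : 0 < d 0 <= 1) :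
  (forall t, 0 <= t -> 0 <= theta1 x alpha (d t) <= w) /\
  is_lim (fun t => theta1 x alpha (d t)) p_infty 0.
Proof.
pose proof (rumor_vanishing_bounds Hsub Hd0) as Hbounds. cbv zeta in Hbounds.
set (gam := k * nu * w ^ 2 / 2) in Hbounds.
assert (Hw : 0 < w) by (unfold w; nra).
assert (Hgam : 0 < gam).
{ unfold gam. apply Rdiv_lt_0_compat; [apply Rmult_lt_0_compat; [lra | apply pow_lt; lra] | lra]. }
assert (Htheta1 : forall t, theta1 x alpha (d t) = w * d t) by (intros; unfold theta1, w; ring).
split.
- intros t Ht. rewrite Htheta1. destruct (Hbounds t Ht) as [Hpos Hle].
  assert (/ (1 + gam * t) <= 1) by (rewrite <- Rinv_1; apply Rinv_le_contravar; nra).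
  split; nra.
- apply is_lim_spec. intros eps. pose proof (cond_pos eps) as Heps.
  exists (Rmax 0 (w / (gam * eps))). intros t Ht.
  pose proof (Rmax_l 0 (w / (gam * eps))). pose proof (Rmax_r 0 (w / (gam * eps))).
  destruct (Hbounds t ltac:(lra)) as [Hpos Hle].
  assert (Hslow : w < eps * (1 + gam * t)).
  { assert (Hlate : w / (gam * eps) < t) by lra.
    apply Rmult_lt_compat_l with (r := gam * eps) in Hlate; [|nra].
    replace (gam * eps * (w / (gam * eps))) with w in Hlate by (field; lra). nra. }
  assert (Hdecay : w * / (1 + gam * t) < eps).
  { apply Rmult_lt_reg_r with (1 + gam * t); [nra|].
    rewrite Rmult_assoc, Rinv_l by nra. lra. }
  rewrite Htheta1, Rminus_0_r, Rabs_right by nra.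
  assert (w * d t <= w * / (1 + gam * t)) by (apply Rmult_le_compat_l; lra). lra.
Qed.

Lemma rumor_prevalence_converges (Hd0 : 0 < d 0 <= 1) : exists m0 B, 0 < m0 < 1 /\
  (forall t, 0 <= t -> m0 * s <= theta1 x alpha (d t) <= B) /\
  is_lim (fun t => theta1 x alpha (d t)) p_infty s.
Proof.
destruct theta1_ss_cases as [[Hend Hs] | [Hs0 Hsub]]; [apply rumor_endemic; lra|].
destruct (rumor_vanishing Hsub Hd0) as [Hbounds Hlim].
exists (1/2), w. rewrite Hs0, Rmult_0_r. split; [lra|]. split; assumption.
Qed.

Section Truth.

Variables (th0s : R).
Hypotheses (Hth0s : 0 < th0s) (Hfix : H x alpha (k * nu / dl) s th0s = th0s).

Let lam := k * nu / dl.
Let as_ := rho_ss lam (th0s + s).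
Let bs := rho_ss lam th0s.

Let Hs : 0 <= s.
Proof. apply Rmax_r. Qed.

Let Hlam : 0 < lam.
Proof. apply Rdiv_lt_0_compat; lra. Qed.

Let Has : 0 < as_ < 1.
Proof.
pose proof (rho_ss_bounds lam (th0s + s) Hlam ltac:(lra)).
pose proof (rho_ss_pos lam (th0s + s) Hlam ltac:(lra)). unfold as_. lra.
Qed.

Let Hbs : 0 < bs < 1.
Proof.
pose proof (rho_ss_bounds lam th0s Hlam ltac:(lra)).
pose proof (rho_ss_pos lam th0s Hlam Hth0s). unfold bs. lra.
Qed.

Let P := Rmin (as_ * (th0s + s)) (bs * th0s).

Let HP : 0 < P /\ P <= as_ * (th0s + s) /\ P <= bs * th0s.
Proof.
split; [apply Rmin_pos; apply Rmult_lt_0_compat; lra|].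
split; [apply Rmin_l | apply Rmin_r].
Qed.

Let Hth0s_eq : th0s = x * alpha * as_ + x * (1 - alpha) * bs + (1 - x) * alpha * as_.
Proof. rewrite <- Hfix at 1. rewrite H_rho_ss. unfold as_, bs, lam. ring. Qed.

Lemma truth_relaxes t0 m0 m1 M0 M1 eta : 0 <= t0 -> 0 < m0 <= m1 -> m1 < 1 -> 1 < M1 <= M0 ->
  0 <= eta -> eta < (M1 - 1) * P ->
  (forall t, t0 <= t -> m1 * s <= theta1 x alpha (d t) <= M1 * s + eta) ->
  in_box (truth_compartments x alpha a b c d as_ bs th0s s) m0 M0 t0 ->
  exists eps, 0 < eps /\ forall t, t0 <= t ->
    in_box (truth_compartments x alpha a b c d as_ bs th0s s)
      (relax m0 m1 eps t0 t) (relax M0 M1 eps t0 t) t.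
Proof.
intros Ht0 Hm Hm1 HM Heta HetaP Hrumor Hinit.
assert (eta < (M1 - 1) * as_ * (th0s + s))
  by (rewrite Rmult_assoc; apply Rlt_le_trans with (1 := HetaP); apply Rmult_le_compat_l; lra).
assert (eta < (M1 - 1) * bs * th0s)
  by (rewrite Rmult_assoc; apply Rlt_le_trans with (1 := HetaP); apply Rmult_le_compat_l; lra).
assert (Hbal_a := rho_ss_balance k nu dl (th0s + s) Hknu Hdl ltac:(lra)).
assert (Hbal_b := rho_ss_balance k nu dl th0s Hknu Hdl ltac:(lra)).
apply (relaxing_box_invariant k nu dl _ t0 m0 m1 M0 M1 eta); try assumption.
- intros cc [<- | [<- | [<- | []]]]; simpl; repeat split; try nra; assumption.
- intros cc [<- | [<- | [<- | []]]] t Ht; apply Hsol; lra.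
- intros t m M Ht Hm' HM' Hbox.
  destruct (theta0_in_box x alpha a b c d as_ bs th0s s m M t Hth0s_eq Hbox) as [Hlo Hhi].
  destruct (Hrumor t Ht) as [Hr1 Hr2].
  assert (m * s <= m1 * s) by (apply Rmult_le_compat_r; lra).
  assert (M1 * s <= M * s) by (apply Rmult_le_compat_r; lra).
  intros cc [<- | [<- | [<- | []]]]; simpl; lra.
Qed.

(* Before th1 has settled, its global bound B enters as the slack eta, which is why M0
   has to be large. *)
Lemma truth_globally_boxed (Ha0 : 0 < a 0 <= 1) (Hb0 : 0 < b 0 <= 1)
  (Hc0 : 0 < c 0 <= 1) (Hd0 : 0 < d 0 <= 1) : exists m0 M0, 0 < m0 < 1 /\ 1 < M0 /\
  forall t, 0 <= t -> in_box (truth_compartments x alpha a b c d as_ bs th0s s) m0 M0 t.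
Proof.
destruct (rumor_prevalence_converges Hd0) as [m0d [B [Hm0d [Hrumor _]]]].
assert (HB : m0d * s <= B) by (destruct (Hrumor 0 (Rle_refl 0)); lra).
assert (Hm0ds : 0 <= m0d * s) by (apply Rmult_le_pos; lra).
pose proof (Rmin_l (Rmin (1/2) m0d) (Rmin (a 0) (Rmin (b 0) (c 0)))).
pose proof (Rmin_r (Rmin (1/2) m0d) (Rmin (a 0) (Rmin (b 0) (c 0)))).
pose proof (Rmin_l (1/2) m0d). pose proof (Rmin_r (1/2) m0d).
pose proof (Rmin_l (a 0) (Rmin (b 0) (c 0))). pose proof (Rmin_r (a 0) (Rmin (b 0) (c 0))).
pose proof (Rmin_l (b 0) (c 0)). pose proof (Rmin_r (b 0) (c 0)).
assert (Hm0 : 0 < Rmin (Rmin (1/2) m0d) (Rmin (a 0) (Rmin (b 0) (c 0))))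
  by (repeat apply Rmin_pos; lra).
set (m0 := Rmin (Rmin (1/2) m0d) (Rmin (a 0) (Rmin (b 0) (c 0)))) in *.
pose proof (Rinv_0_lt_compat as_ ltac:(lra)). pose proof (Rinv_0_lt_compat bs ltac:(lra)).
assert (HBP : 0 <= B / P) by (apply Rdiv_le_0_compat; lra).
set (M0 := 2 + / as_ + / bs + B / P).
assert (HM0a : 1 <= M0 * as_).
{ replace 1 with (/ as_ * as_) by (field; lra). apply Rmult_le_compat_r; unfold M0; lra. }
assert (HM0b : 1 <= M0 * bs).
{ replace 1 with (/ bs * bs) by (field; lra). apply Rmult_le_compat_r; unfold M0; lra. }
assert (HBlt : B < (M0 - 1) * P).
{ replace B with (B / P * P) at 1 by (field; lra).
  apply Rmult_lt_compat_r; unfold M0; lra. }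
assert (HM0 : 1 < M0) by (unfold M0; lra).
exists m0, M0. split; [lra|]. split; [exact HM0|].
destruct (truth_relaxes 0 m0 m0 M0 M0 B) as [eps [_ Hbox]]; try lra.
- intros t Ht. destruct (Hrumor t Ht).
  assert (m0 * s <= m0d * s) by (apply Rmult_le_compat_r; lra).
  assert (0 <= M0 * s) by (apply Rmult_le_pos; lra). lra.
- assert (m0 * as_ <= m0) by nra. assert (m0 * bs <= m0) by nra.
  assert (0 <= x * alpha) by nra. assert (0 <= x * (1 - alpha)) by nra.
  assert (0 <= (1 - x) * alpha) by nra.
  intros cc [<- | [<- | [<- | []]]]; unfold lower_gap, upper_gap; simpl; split; nra.
- intros t Ht. specialize (Hbox t Ht). rewrite !relax_const in Hbox. exact Hbox.
Qed.

Lemma truth_prevalence_converges (Ha0 : 0 < a 0 <= 1) (Hb0 : 0 < b 0 <= 1)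
  (Hc0 : 0 < c 0 <= 1) (Hd0 : 0 < d 0 <= 1) :
  is_lim (fun t => theta0 x alpha (a t) (b t) (c t)) p_infty th0s.
Proof.
destruct (truth_globally_boxed Ha0 Hb0 Hc0 Hd0) as [m0 [M0 [Hm0 [HM0 Hglobal]]]].
destruct (rumor_prevalence_converges Hd0) as [m0d [B [Hm0d [Hrumor Hlim]]]].
apply (is_lim_of_relaxing_bounds _ th0s m0 M0 Hth0s Hm0 HM0).
intros m1 M1 Hm1 HM1.
set (eta := (M1 - 1) * P / 2).
assert (Heta : 0 < eta) by (unfold eta; apply Rdiv_lt_0_compat; [apply Rmult_lt_0_compat|]; lra).
destruct (is_lim_eventually_band _ s m1 M1 eta Hlim Hs) as [T0 [HT0 Hband]]; try lra.
{ intros t Ht. destruct (Hrumor t Ht). pose proof (Rmult_le_pos m0d s). lra. }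
destruct (truth_relaxes T0 m0 m1 M0 M1 eta HT0) as [eps [Heps Hbox]];
  try (unfold eta in *; lra); [exact Hband | exact (Hglobal T0 HT0)|].
exists T0, eps. split; [exact Heps|]. intros t Ht.
exact (theta0_in_box x alpha a b c d as_ bs th0s s _ _ t Hth0s_eq (Hbox t Ht)).
Qed.

End Truth.

End Solution.

Lemma endemic_or_supercritical x alpha lam : 0 <= x < 1 -> 0 < alpha < 1 -> 0 < lam ->
  alpha > / (1 - x) * (/ lam - x) \/ alpha < 1 - / (lam * (1 - x)) ->
  0 < theta1_ss x alpha lam \/ 1 < lam * (alpha + x * (1 - alpha)).
Proof.
intros Hx Halpha Hlam [Hsuper | Hend].
- right. apply Rmult_lt_compat_l with (r := lam * (1 - x)) in Hsuper; [|nra].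
  replace (lam * (1 - x) * (/ (1 - x) * (/ lam - x))) with (1 - lam * x) in Hsuper
    by (field; lra).
  nra.
- left. apply Rmult_lt_compat_r with (r := 1 - x) in Hend; [|lra].
  replace ((1 - / (lam * (1 - x))) * (1 - x)) with (1 - x - / lam) in Hend by (field; lra).
  unfold theta1_ss. rewrite Rmax_left; lra.
Qed.

Theorem proposition1 (x alpha : R) (k : nat) (nu delta : R) :
  0 <= x < 1 -> (0 < k)%nat -> 0 < nu -> 0 < delta -> 0 < alpha < 1 ->
  let lam := INR k * nu / delta in
  (alpha > / (1 - x) * (/ lam - x) \/ alpha < 1 - / (lam * (1 - x))) ->
  (exists th0 : R,
     0 < th0 /\
     H x alpha lam (theta1_ss x alpha lam) th0 = th0 /\
     (forall t, 0 < t -> H x alpha lam (theta1_ss x alpha lam) t = t -> t = th0) /\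
     (forall a b c d : R -> R,
        is_solution x alpha (INR k) nu delta a b c d ->
        0 < a 0 <= 1 -> 0 < b 0 <= 1 -> 0 < c 0 <= 1 -> 0 < d 0 <= 1 ->
        is_lim (fun t => theta0 x alpha (a t) (b t) (c t)) p_infty th0)) /\
  (0 < theta1_ss x alpha lam ->
     forall s1 s2 t1 t2 : R, 0 < s1 < s2 -> 0 < t1 -> 0 < t2 ->
       H x alpha lam s1 t1 = t1 -> H x alpha lam s2 t2 = t2 -> t1 < t2).
Proof.
intros Hx Hk Hnu Hdl Halpha lam Hcond.
assert (Hknu : 0 < INR k * nu) by (apply Rmult_lt_0_compat; [apply lt_0_INR, Hk | exact Hnu]).
assert (Hlam : 0 < lam) by (apply Rdiv_lt_0_compat; lra).
assert (Hs : 0 <= theta1_ss x alpha lam) by apply Rmax_r.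
split.
- destruct (H_fixed_point_exists x alpha lam Hx Halpha Hlam _ Hs
              (endemic_or_supercritical x alpha lam Hx Halpha Hlam Hcond)) as [th0 [Hth0 Hfix]].
  exists th0. repeat split; [exact Hth0 | exact Hfix | |].
  + intros t Ht Hfix_t.
    exact (H_fixed_point_unique x alpha lam Hx Halpha Hlam _ t th0 Hs Ht Hth0 Hfix_t Hfix).
  + intros a b c d Hsol Ha Hb Hc Hd.
    exact (truth_prevalence_converges x alpha (INR k) nu delta a b c d Hx Halpha Hknu Hdl Hsol
             th0 Hth0 Hfix Ha Hb Hc Hd).
- intros _ s1 s2 t1 t2 Hs12 Ht1 Ht2.
  apply (H_fixed_point_increasing x alpha lam Hx Halpha Hlam); lra.
Qed.
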